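(* Let $A=\begin{bmatrix}T_{SS}&T_{SR}\\ 0&T_{RR}\end{bmatrix}\in\mathbb{R}^{N\times N}$ be a combination matrix of the weakly-connected form described in the context. Then $I-T_{RR}$ is invertible and the limit $\lim_{n\to\infty}A^n$ exists and equals $$A_\infty=\begin{bmatrix}\Theta & \Theta W\\ 0 & 0\end{bmatrix},\qquad W=T_{SR}(I-T_{RR})^{-1},\qquad \Theta=\mathrm{blockdiag}\{p_1\mathbb{1}_{N_1}^{\mathsf T},\dots,p_S\mathbb{1}_{N_S}^{\mathsf T}\},$$ where $p_s$ is the Perron vector of $A_s$ and $\mathbb{1}_{N_s}$ is the all-ones vector of length $N_s$.
   Context: $N$ agents are partitioned into sub-networks $1,\dots,S+R$ ($S\ge 1$), sub-network $j$ having $N_j$ agents; agents are numbered so that those of sub-networks $1,\dots,S$ (group $S$, $N_{gS}=N_1+\cdots+N_S$ agents) come first, followed by those of sub-networks $S+1,\dots,S+R$ (group $R$, $N_{gR}=N_{S+1}+\cdots+N_{S+R}$ agents). The combination matrix $A=[a_{\ell k}]$ has nonnegative entries, is left-stochastic ($\sum_{\ell}a_{\ell k}=1$ for every $k$, i.e. $A^{\mathsf T}\mathbb{1}=\mathbb{1}$), and has the block form $A=\begin{bmatrix}T_{SS}&T_{SR}\\0&T_{RR}\end{bmatrix}$ with $T_{SS}\in\mathbb{R}^{N_{gS}\times N_{gS}}$, $T_{RR}\in\mathbb{R}^{N_{gR}\times N_{gR}}$. Here $T_{SS}=\mathrm{blockdiag}\{A_1,\dots,A_S\}$ where each $A_s\in\mathbb{R}^{N_s\times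 N_s}$ is left-stochastic and primitive (sub-network $s$ is strongly connected). $T_{RR}$ is block upper triangular with diagonal blocks $A_{S+1},\dots,A_{S+R}$, where $A_r\in\mathbb{R}^{N_r\times N_r}$ contains the weights on edges internal to sub-network $r$; each sub-network $r$ of group $R$ is connected (so $A_r$ is a nonnegative irreducible matrix) and receives information from agents outside it, so that at least one column of $A_r$ sums to a number strictly smaller than one. For $s=1,\dots,S$, the Perron vector $p_s$ of $A_s$ is the unique vector with $A_sp_s=p_s$, $\mathbb{1}^{\mathsf T}p_s=1$, and all entries positive. *)

From HB Require Import structures.
From mathcomp Require Import all_boot all_order all_algebra.
From mathcomp Require Import all_classical all_reals all_analysis.
Set Implicit Arguments. Unset Strict Implicit. Unset Printing Implicit Defensive.
Import Order.TTheory GRing.Theory Num.Theory.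
Import numFieldNormedType.Exports.
Local Open Scope ring_scope.

Definition primitive_mx (R : realType) (n : nat) (M : 'M[R]_n) : Prop :=
  (forall i j, 0 <= M i j) /\ exists m : nat, forall i j, 0 < (M ^+ m.+1) i j.

Definition irreducible_mx (R : realType) (n : nat) (M : 'M[R]_n) : Prop :=
  (forall i j, 0 <= M i j) /\ forall i j, exists m : nat, 0 < (M ^+ m) i j.

Definition perron_vector (R : realType) (n : nat) (M : 'M[R]_n) (p : 'cV[R]_n)
  : Prop :=
  M *m p = p /\ \sum_(i < n) p i 0 = 1 /\ forall i, 0 < p i 0.

From HB Require Import structures.
From mathcomp Require Import all_boot all_order all_algebra.
From mathcomp Require Import all_classical all_reals all_analysis.
From mathcomp Require Import lra zify.
Import Order.TTheory GRing.Theory Num.Theory.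
Import numFieldNormedType.Exports.
Local Open Scope classical_set_scope.
Local Open Scope ring_scope.
Set Implicit Arguments. Unset Strict Implicit.

(* A^k = [[T_SS^k, X_k], [0, T_RR^k]] stays block upper triangular.  Each A_s is
   column-stochastic and some power A_s^(m+1) has all entries >= d > 0, so that
   power contracts the l1-norm of zero-sum vectors by 1 - N_s d (Dobrushin);
   hence A_s^k -> p_s 1^T.  In T_RR every column reaches, along positive entries
   pointing to earlier blocks, a column whose sum is < 1; so some power of T_RR
   has all column sums < 1, T_RR^k -> 0 geometrically and I - T_RR is
   invertible.  Finally Theta T_SS = Theta gives
   Theta X_k = Theta T_SR (I + T_RR + ... + T_RR^(k-1)) -> Theta W, and splitting
   X_k at k/2 shows X_k -> Theta W. *)

Section NullSequences.
Variable R : realType.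

Definition mx_null m n (u : nat -> 'M[R]_(m, n)) :=
  forall e : R, 0 < e -> exists N, forall k, (N <= k)%N -> forall i j, `|u k i j| <= e.

Definition mx_bounded m n (u : nat -> 'M[R]_(m, n)) :=
  exists K : R, 0 <= K /\ forall k i j, `|u k i j| <= K.

Lemma mx_null_cvg m n (u : nat -> 'M[R]_(m, n)) L :
  mx_null (fun k => u k - L) -> u @ \oo --> L.
Proof.
move=> z; apply/cvgrPdist_le => e e0; have [N HN] := z e e0.
exists N => // k /= Nk.
rewrite [leLHS]/Num.Def.normr/= mx_normrE (bigmax_le _ (ltW e0))//= => -[i j] _ /=.
by rewrite -normrN !mxE opprB; have := HN k Nk i j; rewrite !mxE.
Qed.

Lemma eq_mx_null m n (u v : nat -> 'M[R]_(m, n)) :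
  (forall k, u k = v k) -> mx_null u -> mx_null v.
Proof. by move=> E z e /z [N HN]; exists N => k Nk i j; rewrite -E; apply: HN. Qed.

Lemma mx_null0 m n : mx_null (fun _ => (0 : 'M[R]_(m, n))).
Proof. by move=> e e0; exists 0%N => k _ i j; rewrite mxE normr0 ltW. Qed.

Lemma mx_nullD m n (u v : nat -> 'M[R]_(m, n)) :
  mx_null u -> mx_null v -> mx_null (fun k => u k + v k).
Proof.
move=> zu zv e e0; have e20 : 0 < e / 2 by rewrite divr_gt0.
have [N1 H1] := zu _ e20; have [N2 H2] := zv _ e20.
exists (maxn N1 N2) => k; rewrite geq_max => /andP[k1 k2] i j.
by rewrite mxE (le_trans (ler_normD _ _)) // [e](splitr e) lerD ?H1 ?H2.
Qed.

Lemma mx_nullN m n (u : nat -> 'M[R]_(m, n)) : mx_null u -> mx_null (fun k => - u k).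
Proof. by move=> z e /z [N HN]; exists N => k Nk i j; rewrite mxE normrN HN. Qed.

Lemma mx_bounded_cst m n (M : 'M[R]_(m, n)) : mx_bounded (fun _ => M).
Proof.
exists (\big[Num.max/0]_(ij : 'I_m * 'I_n) `|M ij.1 ij.2|).
split=> [|_ i j]; first exact: bigmax_ge_id.
exact: (le_bigmax _ _ (i, j)).
Qed.

Lemma normr_mulmx_entry_le p m n (A : 'M[R]_(p, m)) (B : 'M[R]_(m, n)) a b i j :
  (forall l, `|A i l| <= a) -> (forall l, `|B l j| <= b) ->
  `|(A *m B) i j| <= m%:R * (a * b).
Proof.
move=> Aa Bb; rewrite mxE (le_trans (ler_norm_sum _ _ _)) //.
rewrite mulr_natl -[m in _ *+ m]card_ord -sumr_const ler_sum // => l _.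
by rewrite normrM ler_pM.
Qed.

Lemma small_factor (m : nat) (K e : R) : 0 <= K -> 0 < e ->
  exists2 d, 0 < d & m%:R * (K * d) <= e.
Proof.
move=> K0 e0; have d0 : 0 < m%:R * K + 1 by rewrite ltr_wpDl // mulr_ge0.
exists (e / (m%:R * K + 1)); first by rewrite divr_gt0.
by rewrite mulrA mulrCA ler_piMr ?(ltW e0) // ler_pdivrMr // mul1r lerDl.
Qed.

Lemma mx_null_mull p m n (B : nat -> 'M[R]_(p, m)) (u : nat -> 'M[R]_(m, n)) :
  mx_bounded B -> mx_null u -> mx_null (fun k => B k *m u k).
Proof.
move=> [K [K0 HK]] z e e0; have [d d0 hd] := small_factor m K0 e0.
have [N HN] := z d d0; exists N => k Nk i j.
by apply: le_trans hd; apply: normr_mulmx_entry_le => l; [apply: HK | apply: HN].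
Qed.

Lemma mx_null_mulr p m n (u : nat -> 'M[R]_(p, m)) (B : nat -> 'M[R]_(m, n)) :
  mx_bounded B -> mx_null u -> mx_null (fun k => u k *m B k).
Proof.
move=> [K [K0 HK]] z e e0; have [d d0 hd] := small_factor m K0 e0.
have [N HN] := z d d0; exists N => k Nk i j; rewrite (mulrC K) in hd.
by apply: le_trans hd; apply: normr_mulmx_entry_le => l; [apply: HN | apply: HK].
Qed.

Lemma mx_null_comp m n (u : nat -> 'M[R]_(m, n)) (phi : nat -> nat) :
  (forall N, exists M, forall k, (M <= k)%N -> (N <= phi k)%N) ->
  mx_null u -> mx_null (fun k => u (phi k)).
Proof.
move=> phioo z e /z [N HN]; have [M HM] := phioo N.
by exists M => k /HM; apply: HN.
Qed.

Lemma mx_null_block m1 m2 n1 n2 (u1 : nat -> 'M[R]_(m1, n1))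
  (u2 : nat -> 'M[R]_(m1, n2)) (u3 : nat -> 'M[R]_(m2, n1))
  (u4 : nat -> 'M[R]_(m2, n2)) :
  mx_null u1 -> mx_null u2 -> mx_null u3 -> mx_null u4 ->
  mx_null (fun k => block_mx (u1 k) (u2 k) (u3 k) (u4 k)).
Proof.
move=> z1 z2 z3 z4 e e0.
have [N1 H1] := z1 e e0; have [N2 H2] := z2 e e0.
have [N3 H3] := z3 e e0; have [N4 H4] := z4 e e0.
exists (maxn (maxn N1 N2) (maxn N3 N4)) => k.
rewrite !geq_max => /andP[/andP[k1 k2] /andP[k3 k4]] i j.
rewrite -(splitK i) -(splitK j).
case: (fintype.split i) => a; case: (fintype.split j) => b /=.
- by rewrite block_mxEul H1.
- by rewrite block_mxEur H2.
- by rewrite block_mxEdl H3.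
- by rewrite block_mxEdr H4.
Qed.

Lemma fin_eventually (I : finType) (Q : I -> nat -> Prop) :
  (forall i, exists N, forall k, (N <= k)%N -> Q i k) ->
  exists N, forall i k, (N <= k)%N -> Q i k.
Proof.
move=> H; have [f Hf] := choice H; exists (\max_(i : I) f i)%N => i k Nk.
by apply: Hf; apply: leq_trans Nk; apply: leq_bigmax.
Qed.

Lemma geometric_decay (a : nat -> R) m c : (0 < m)%N -> 0 <= c -> c < 1 ->
  (forall k, 0 <= a k) -> (forall k, a k.+1 <= a k) ->
  (forall k, a (k + m)%N <= c * a k) ->
  forall e, 0 < e -> exists N, forall k, (N <= k)%N -> a k <= e.
Proof.
move=> m0 c0 c1 a0 adec ac e e0.
have amono : {homo a : i j / (i <= j)%N >-> j <= i}.
  by apply/nonincreasing_seqP => k; apply: adec.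
have geo q : a (q * m)%N <= c ^+ q * a 0%N.
  elim: q => [|q IH]; first by rewrite mul0n expr0 mul1r.
  by rewrite mulSn addnC (le_trans (ac _)) // exprS -mulrA ler_wpM2l.
have ea0 : 0 < e / (a 0%N + 1) by rewrite divr_gt0 // ltr_wpDl.
have /cvgrPdist_le/(_ _ ea0) [q0 _ Hq] : (fun n => c ^+ n) @ \oo --> 0.
  by apply: cvg_expr; rewrite ger0_norm.
have cq : c ^+ q0 * a 0%N <= e.
  have := Hq q0 (leqnn q0); rewrite /= sub0r normrN ger0_norm ?exprn_ge0 // => h.
  rewrite (le_trans (ler_wpM2r (a0 _) h)) // mulrAC ler_pdivrMr ?ltr_wpDl //.
  by rewrite ler_pM2l // lerDl.
exists (q0 * m)%N => k Nk.
rewrite (le_trans (amono _ _ (leq_divM k m))) // (le_trans (geo _)) //.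
rewrite (le_trans _ cq) // ler_wpM2r // ler_wiXn2l // ?ltW //.
by rewrite leq_divRL.
Qed.

End NullSequences.

Lemma ler_sum_term (R : numDomainType) (I : finType) (F : I -> R) i :
  (forall j, 0 <= F j) -> F i <= \sum_j F j.
Proof. by move=> F0; rewrite (bigD1 i) //= lerDl sumr_ge0. Qed.
Arguments ler_sum_term {R I} F i.

Section ColumnStochastic.
Variable R : realType.

Definition nonneg_mx m n (M : 'M[R]_(m, n)) := forall i j, 0 <= M i j.

Lemma nonneg_mulmx m n p (A : 'M[R]_(m, n)) (B : 'M[R]_(n, p)) :
  nonneg_mx A -> nonneg_mx B -> nonneg_mx (A *m B).
Proof. by move=> A0 B0 i j; rewrite mxE sumr_ge0 // => l _; rewrite mulr_ge0. Qed.

Lemma nonneg_mx1 n : nonneg_mx (1%:M : 'M[R]_n).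
Proof. by move=> i j; rewrite mxE ler0n. Qed.

Lemma nonneg_mxexp n (M : 'M[R]_n) k : nonneg_mx M -> nonneg_mx (M ^+ k).
Proof.
move=> M0; elim: k => [|k IH]; first by rewrite expr0; apply: nonneg_mx1.
by rewrite exprS -mulmxE; apply: nonneg_mulmx.
Qed.

Lemma colsum_mulmx m n p (A : 'M[R]_(m, n)) (B : 'M[R]_(n, p)) j :
  \sum_i (A *m B) i j = \sum_l (\sum_i A i l) * B l j.
Proof.
under eq_bigr do rewrite mxE.
by rewrite exchange_big; apply: eq_bigr => l _; rewrite mulr_suml.
Qed.

Lemma colsum_mx1 n (j : 'I_n) : \sum_i (1%:M : 'M[R]_n) i j = 1.
Proof.
rewrite (bigD1 j) //= big1 ?addr0 ?mxE ?eqxx // => i /negbTE ij.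
by rewrite mxE ij.
Qed.

Lemma colsum_mxexp_eq1 n (M : 'M[R]_n) k : (forall j, \sum_i M i j = 1) ->
  forall j, \sum_i (M ^+ k) i j = 1.
Proof.
move=> M1; elim: k => [|k IH] j; first by rewrite expr0 colsum_mx1.
rewrite exprS -mulmxE colsum_mulmx -(IH j).
by apply: eq_bigr => l _; rewrite M1 mul1r.
Qed.

Lemma colsum_mulmx_le m n p (A : 'M[R]_(m, n)) (B : 'M[R]_(n, p)) j :
  nonneg_mx A -> nonneg_mx B -> (forall l, \sum_i A i l <= 1) ->
  \sum_i (A *m B) i j <= \sum_l B l j.
Proof. by move=> A0 B0 A1; rewrite colsum_mulmx ler_sum // => l _; rewrite ler_piMl. Qed.

Lemma colsum_mxexp_le1 n (M : 'M[R]_n) k :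
  nonneg_mx M -> (forall j, \sum_i M i j <= 1) -> forall j, \sum_i (M ^+ k) i j <= 1.
Proof.
move=> M0 M1; elim: k => [|k IH] j; first by rewrite expr0 colsum_mx1.
rewrite exprS -mulmxE (le_trans _ (IH j)) // colsum_mulmx_le //.
exact: nonneg_mxexp.
Qed.

Lemma stochastic_mxexp_entry_le1 n (M : 'M[R]_n) k i j :
  nonneg_mx M -> (forall j, \sum_i M i j = 1) -> `|(M ^+ k) i j| <= 1.
Proof.
move=> M0 M1; rewrite ger0_norm; last exact: nonneg_mxexp.
rewrite -(colsum_mxexp_eq1 k M1 j).
by apply: (ler_sum_term (fun l => (M ^+ k) l j)) => l; apply: nonneg_mxexp.
Qed.

Lemma const1_mul_stochastic m n (M : 'M[R]_n) : (forall j, \sum_i M i j = 1) ->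
  const_mx 1 *m M = const_mx 1 :> 'M[R]_(m, n).
Proof.
move=> M1; apply/matrixP => i j; rewrite !mxE -[RHS](M1 j).
by apply: eq_bigr => l _; rewrite mxE mul1r.
Qed.

Lemma mxexp_pos_trans n (M : 'M[R]_n) a b j l l' : nonneg_mx M ->
  0 < (M ^+ a) l j -> 0 < (M ^+ b) l' l -> 0 < (M ^+ (b + a)) l' j.
Proof.
move=> M0 h1 h2; rewrite exprD -mulmxE mxE (bigD1 l) //= ltr_wpDr ?mulr_gt0 //.
by apply: sumr_ge0 => i _; rewrite mulr_ge0 // nonneg_mxexp.
Qed.

End ColumnStochastic.

Section L1Contraction.
Variable R : realType.

Definition l1norm n (x : 'cV[R]_n) := \sum_i `|x i 0|.

Lemma l1norm_ge0 n (x : 'cV[R]_n) : 0 <= l1norm x.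
Proof. exact: sumr_ge0. Qed.

Lemma normr_entry_le_l1norm n (x : 'cV[R]_n) i : `|x i 0| <= l1norm x.
Proof. exact: (ler_sum_term (fun i => `|x i 0|)). Qed.

Lemma l1norm_mulmx_le m n (M : 'M[R]_(m, n)) (x : 'cV[R]_n) g :
  nonneg_mx M -> (forall j, \sum_i M i j <= g) -> l1norm (M *m x) <= g * l1norm x.
Proof.
move=> M0 Mg; rewrite /l1norm.
apply: (le_trans (y := \sum_i \sum_j M i j * `|x j 0|)).
  apply: ler_sum => i _; rewrite mxE (le_trans (ler_norm_sum _ _ _)) //.
  by apply: ler_sum => j _; rewrite normrM (ger0_norm (M0 i j)).
rewrite exchange_big mulr_sumr ler_sum // => j _.
by rewrite -mulr_suml ler_wpM2r.
Qed.

(* Subtracting the constant d from every entry keeps the column sums of the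
   result at 1 - n d and does not change [M *m x] when x sums to zero. *)
Lemma l1norm_mulmx_zero_sum n (M : 'M[R]_n) (x : 'cV[R]_n) d :
  (forall i j, d <= M i j) -> (forall j, \sum_i M i j = 1) -> \sum_i x i 0 = 0 ->
  l1norm (M *m x) <= (1 - n%:R * d) * l1norm x.
Proof.
move=> dM M1 x0.
have -> : M *m x = (M - const_mx d) *m x.
  rewrite mulmxBl [const_mx d *m x](_ : _ = 0) ?subr0 //.
  apply/matrixP => i j; rewrite !mxE; under eq_bigr do rewrite mxE.
  by rewrite -mulr_sumr ord1 x0 mulr0.
apply: l1norm_mulmx_le => [i j|j]; first by rewrite !mxE subr_ge0.
under eq_bigr do rewrite !mxE.
by rewrite sumrB M1 sumr_const card_ord mulr_natl.
Qed.

Lemma fin_pos_lower_bound (I : finType) (f : I -> R) : (forall i, 0 < f i) ->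
  exists2 d, 0 < d & forall i, d <= f i.
Proof.
move=> fp; exists (\big[Order.min/1]_i f i); last by move=> i; apply: bigmin_le.
by apply: (big_ind (fun x => 0 < x)) => // x y x0 y0; rewrite lt_min x0 y0.
Qed.

Lemma fin_lt1_upper_bound (I : finType) (f : I -> R) : (forall i, f i < 1) ->
  exists r, [/\ 0 <= r, r < 1 & forall i, f i <= r].
Proof.
move=> f1; exists (\big[Order.max/0]_i f i); split.
- exact: bigmax_ge_id.
- by apply: (big_ind (fun x => x < 1)) => // x y x1 y1; rewrite gt_max x1 y1.
- by move=> i; apply: le_bigmax.
Qed.

Lemma mx_null_columns n m (M : nat -> 'M[R]_(n, m)) :
  (forall j e, 0 < e -> exists N, forall k, (N <= k)%N -> l1norm (col j (M k)) <= e) ->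
  mx_null M.
Proof.
move=> H e e0.
have [N HN] := fin_eventually (Q := fun j k => l1norm (col j (M k)) <= e)
  (fun j => H j e e0).
exists N => k Nk i j; have := normr_entry_le_l1norm (col j (M k)) i.
by rewrite mxE => /le_trans; apply; apply: HN.
Qed.

Lemma col_mulmx m n p (A : 'M[R]_(m, n)) (B : 'M[R]_(n, p)) j :
  col j (A *m B) = A *m col j B.
Proof. by apply/matrixP => i k; rewrite !mxE; apply: eq_bigr => l _; rewrite !mxE. Qed.

End L1Contraction.

Section PowersOfSubstochastic.
Variable R : realType.

Lemma mx_null_l1_contraction n (M X : 'M[R]_n) m c :
  nonneg_mx M -> (forall j, \sum_i M i j <= 1) -> 0 <= c -> c < 1 ->
  (forall j k, l1norm (M ^+ m.+1 *m (M ^+ k *m col j X))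
               <= c * l1norm (M ^+ k *m col j X)) ->
  mx_null (fun k => M ^+ k *m X).
Proof.
move=> M0 M1 c0 c1 contr; apply: mx_null_columns => j.
apply: (geometric_decay (m := m.+1) (c := c)) => // [k|k|k].
- exact: l1norm_ge0.
- by rewrite !col_mulmx exprS -mulmxE -mulmxA -[leRHS]mul1r l1norm_mulmx_le.
- by rewrite !col_mulmx addnC exprD -mulmxE -mulmxA; apply: contr.
Qed.

Lemma perron_mxexp_null n (M : 'M[R]_n) (p : 'cV[R]_n) :
  (forall j, \sum_i M i j = 1) -> primitive_mx M -> perron_vector M p ->
  mx_null (fun k => M ^+ k - p *m const_mx 1).
Proof.
move=> M1 [M0 [m Mpos]] [Mp [p1 _]].
have n0 : (0 < n)%N.
  by case: n {M M1 M0 Mpos Mp} p p1 => // p; rewrite big_ord0 => /eqP; rewrite eq_sym oner_eq0.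
set P := p *m const_mx 1.
have [d d0 dle] := fin_pos_lower_bound (fun ij => Mpos ij.1 ij.2).
have nd1 : n%:R * d <= 1.
  have -> : n%:R * d = \sum_(i < n) d by rewrite sumr_const card_ord mulr_natl.
  rewrite -(colsum_mxexp_eq1 m.+1 M1 (Ordinal n0)) ler_sum // => i _.
  exact: (dle (i, _)).
have nd0 : 0 < n%:R * d by rewrite mulr_gt0 // ltr0n.
have MkP k : M ^+ k *m P = P.
  elim: k => [|k IH]; first by rewrite expr0 mul1mx.
  by rewrite exprSr -mulmxE -mulmxA /P (mulmxA M) Mp IH.
apply: (eq_mx_null (u := fun k => M ^+ k *m (1%:M - P))).
  by move=> k; rewrite mulmxBr mulmx1 MkP.
apply: (mx_null_l1_contraction (m := m) (c := 1 - n%:R * d) M0).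
- by move=> j; rewrite M1.
- by rewrite subr_ge0.
- by rewrite ltrBlDr ltrDl.
move=> j k.
apply: l1norm_mulmx_zero_sum => [i l|l|]; first exact: (dle (i, l)).
  exact: colsum_mxexp_eq1.
rewrite colsum_mulmx (eq_bigr (fun l => col j (1%:M - P) l 0)) => [|l _].
  rewrite (eq_bigr (fun i => 1%:M i j - P i j)) => [|i _]; last by rewrite !mxE.
  rewrite sumrB colsum_mx1 (eq_bigr (fun i => p i 0)) ?p1 ?subrr // => i _.
  by rewrite mxE big_ord1 mxE mulr1.
by rewrite colsum_mxexp_eq1 // mul1r.
Qed.

Lemma substochastic_mxexp_null n (M : 'M[R]_n) :
  nonneg_mx M -> (forall j, \sum_i M i j <= 1) ->
  (exists N, forall j, \sum_i (M ^+ N.+1) i j < 1) -> mx_null (fun k => M ^+ k).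
Proof.
move=> M0 M1 [N HN]; have [r [r0 r1 rle]] := fin_lt1_upper_bound HN.
apply: (eq_mx_null (u := fun k => M ^+ k *m 1%:M)) => [k|]; first exact: mulmx1.
apply: (mx_null_l1_contraction (m := N) (c := r)) => // j k.
by apply: l1norm_mulmx_le => //; apply: nonneg_mxexp.
Qed.

Lemma unitmx_1_subr_mx_null n (M : 'M[R]_n) :
  mx_null (fun k => M ^+ k) -> (1%:M - M) \in unitmx.
Proof.
move=> Mnull; rewrite unitmxE unitfE; apply/negP => /det0P [v /eqP v0 vM].
have vMk k : v *m M ^+ k = v.
  move: vM; rewrite mulmxBr mulmx1 => /eqP; rewrite subr_eq0 => /eqP vM.
  by elim: k => [|k IH]; rewrite ?expr0 ?mulmx1 // exprS -mulmxE mulmxA -vM.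
have vnull := mx_null_mull (mx_bounded_cst v) Mnull.
apply/v0/matrixP => i j; rewrite mxE; apply/eqP; rewrite -normr_le0.
apply/ler_addgt0Pl => e /vnull [N HN]; rewrite addr0 -(vMk N).
exact: HN.
Qed.

Lemma leaky_mxexp n (M : 'M[R]_n) : nonneg_mx M -> (forall j, \sum_i M i j <= 1) ->
  (forall j, exists m l, 0 < (M ^+ m) l j /\ \sum_i M i l < 1) ->
  exists N, forall j, \sum_i (M ^+ N.+1) i j < 1.
Proof.
move=> M0 M1 reach.
have Mk1 k j : \sum_i (M ^+ k) i j <= 1 by apply: colsum_mxexp_le1.
suff [N HN] : exists N, forall j m', (N <= m')%N -> \sum_i (M ^+ m'.+1) i j < 1.
  by exists N => j; apply: HN.
apply: fin_eventually => j; have [m [l [ml lt1]]] := reach j; exists m => m' mm'.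
rewrite -(subnK mm') -addnS exprD -mulmxE.
apply: le_lt_trans (colsum_mulmx_le _ _ _ _) _; try exact: nonneg_mxexp.
  by move=> l'; apply: Mk1.
rewrite exprS -mulmxE colsum_mulmx (lt_le_trans _ (Mk1 m j)) //.
rewrite [ltRHS](bigD1 l) //= [ltLHS](bigD1 l) //= ltr_leD //.
  by rewrite -[ltRHS]mul1r ltr_pM2r.
by rewrite ler_sum // => i _; rewrite ler_piMl ?nonneg_mxexp.
Qed.

End PowersOfSubstochastic.

Section BlockUpperTriangularPowers.
Variable R : realType.
Variables (m n : nat) (P : 'M[R]_m) (Q : 'M[R]_(m, n)) (T : 'M[R]_n).

Let A := block_mx P Q 0 T.
Let X k := ursubmx (A ^+ k).

Lemma block_upper_colsum :
  nonneg_mx A -> (forall k, \sum_l A l k = 1) ->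
  (forall j, \sum_i P i j = 1) /\ (forall j, \sum_i T i j <= 1).
Proof.
move=> A0 A1; split=> j.
  have := A1 (lshift _ j); rewrite big_split_ord /=.
  under eq_bigr do rewrite block_mxEul.
  under [X in _ + X]eq_bigr do rewrite block_mxEdl mxE.
  by rewrite sumr_const mul0rn addr0.
have := A1 (rshift _ j); rewrite big_split_ord /=.
under eq_bigr do rewrite block_mxEur.
under [X in _ + X]eq_bigr do rewrite block_mxEdr.
move=> <-; rewrite lerDr sumr_ge0 // => i _.
by have := A0 (lshift _ i) (rshift _ j); rewrite block_mxEur.
Qed.

Lemma mxexp0_block : A ^+ 0 = block_mx 1%:M 0 0 1%:M.
Proof.
rewrite expr0; have -> : (1 : 'M[R]_(m + n)) = 1%:M by [].
exact: scalar_mx_block.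
Qed.

Lemma block_upper_mxexp k : A ^+ k = block_mx (P ^+ k) (X k) 0 (T ^+ k).
Proof.
elim: k => [|k IH]; first by rewrite /X mxexp0_block block_mxKur.
have E : A ^+ k.+1 = block_mx (P ^+ k.+1) (P ^+ k *m Q + X k *m T) 0 (T ^+ k.+1).
  rewrite exprSr IH -mulmxE mulmx_block !mulmx0 !mul0mx !addr0 !add0r.
  by rewrite !exprSr -!mulmxE.
by rewrite {1}E /X E block_mxKur.
Qed.

Lemma ursubmx_mxexpD a b : X (a + b) = P ^+ a *m X b + X a *m T ^+ b.
Proof.
by rewrite [X (a + b)]/X exprD -mulmxE !block_upper_mxexp mulmx_block block_mxKur.
Qed.

Lemma left_fixed_ursubmx_mxexp (Th : 'M[R]_m) k : Th *m P = Th ->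
  Th *m X k = Th *m Q *m \sum_(i < k) T ^+ i.
Proof.
move=> ThP; elim: k => [|k IH].
  by rewrite /X mxexp0_block block_mxKur big_ord0 !mulmx0.
rewrite -add1n ursubmx_mxexpD mulmxDr mulmxA expr1 ThP IH big_ord_recr /=.
by rewrite /X expr1 block_mxKur mulmxDr !mulmxA.
Qed.

Lemma geometric_mxsum k : (\sum_(i < k) T ^+ i) *m (1%:M - T) = 1%:M - T ^+ k.
Proof.
elim: k => [|k IH]; first by rewrite big_ord0 mul0mx expr0 subrr.
rewrite big_ord_recr /= mulmxDl IH mulmxBr mulmx1 exprSr -mulmxE.
by rewrite addrA subrK.
Qed.

(* A^k splits at k/2: X_k = P^(k-k/2) X_(k/2) + X_(k-k/2) T^(k/2), where
   P^(k-k/2) ~ Th, Th X_(k/2) ~ Th Q (1-T)^-1 and T^(k/2) ~ 0. *)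
Lemma block_upper_mxexp_cvg (Th : 'M[R]_m) :
  Th *m P = Th -> mx_null (fun k => P ^+ k - Th) -> mx_null (fun k => T ^+ k) ->
  (1%:M - T) \in unitmx -> mx_bounded X ->
  (fun k => A ^+ k) @ \oo --> block_mx Th (Th *m (Q *m invmx (1%:M - T))) 0 0.
Proof.
move=> ThP Pnull Tnull U Xbnd; set W := Q *m invmx (1%:M - T).
have ThXnull : mx_null (fun k => Th *m X k - Th *m W).
  apply: (eq_mx_null (u := fun k => - (Th *m Q *m (T ^+ k *m invmx (1%:M - T))))).
    move=> k; rewrite left_fixed_ursubmx_mxexp // /W.
    rewrite -[\sum_(i < k) _](mulmxK U) geometric_mxsum mulmxBl mul1mx.
    by rewrite mulmxBr (mulmxA Th Q) addrAC subrr add0r.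
  apply/mx_nullN/mx_null_mull; first exact: mx_bounded_cst.
  by apply: mx_null_mulr; first exact: mx_bounded_cst.
have half_oo N : exists M, forall k, (M <= k)%N -> (N <= k./2)%N.
  by exists N.*2 => k; rewrite geq_half_double.
have uphalf_oo N : exists M, forall k, (M <= k)%N -> (N <= k - k./2)%N.
  exists N.*2 => k; rewrite -geq_half_double => h.
  have : (k./2 + k./2 <= k)%N by rewrite addnn halfK leq_subr.
  lia.
have Xbnd_comp phi : mx_bounded (fun k => X (phi k)).
  by case: Xbnd => K [K0 HK]; exists K.
have Xnull : mx_null (fun k => X k - Th *m W).
  apply: (eq_mx_null (u := fun k => (P ^+ (k - k./2) - Th) *m X k./2
      + (Th *m X k./2 - Th *m W) + X (k - k./2)%N *m T ^+ k./2)).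
    move=> k; have half_le : (k./2 <= k)%N.
      by rewrite leq_half_double -addnn; apply/leqW/leq_addr.
    rewrite -[X k](congr1 X (subnK half_le)) ursubmx_mxexpD mulmxBl.
    by rewrite addrA subrK addrAC.
  apply: mx_nullD; first apply: mx_nullD.
  - by apply: mx_null_mulr; [exact: Xbnd_comp | exact: (mx_null_comp uphalf_oo Pnull)].
  - exact: (mx_null_comp half_oo ThXnull).
  - by apply: mx_null_mull; [exact: Xbnd_comp | exact: (mx_null_comp half_oo Tnull)].
apply: mx_null_cvg.
apply: (eq_mx_null (u := fun k =>
  block_mx (P ^+ k - Th) (X k - Th *m W) (0 - 0) (T ^+ k - 0))).
  by move=> k; rewrite block_upper_mxexp opp_block_mx add_block_mx.
apply: mx_null_block => //.
- by apply: (eq_mx_null (u := fun k => 0)) => [k|]; [rewrite subr0 | exact: mx_null0].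
- by apply: (eq_mx_null (u := fun k => T ^+ k)) => // k; rewrite subr0.
Qed.

End BlockUpperTriangularPowers.

Section BlockMatrices.
Variable R : realType.
Variables (nb : nat) (p_ : 'I_nb -> nat).

Lemma mxblock_RankE q (q_ : 'I_q -> nat) (B : forall i j, 'M[R]_(p_ i, q_ j)) i j k l :
  (\mxblock_(i, j) B i j) (tagnat.Rank i k) (tagnat.Rank j l) = B i j k l.
Proof. by have := congr1 (fun M : 'M[R]_(p_ i, q_ j) => M k l) (mxblockK B i j); rewrite /= mxE. Qed.

Lemma sum_Rank (F : 'I_(\sum_i p_ i) -> R) :
  \sum_t F t = \sum_i \sum_(k : 'I_(p_ i)) F (tagnat.Rank i k).
Proof.
rewrite (reindex (@tagnat.rank _ p_)); last exact: tagnat.rank_bij_on.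
by rewrite sig_big_dep /=; apply: eq_bigr => -[i k] _; rewrite tagnat.rankE.
Qed.

Lemma mxdiag_RankE (B : forall i, 'M[R]_(p_ i)) i k l :
  (\mxdiag_i B i) (tagnat.Rank i k) (tagnat.Rank i l) = B i k l.
Proof. by rewrite /mxdiag mxblock_RankE eqxx conform_mx_id. Qed.

Lemma mxdiag_Rank0 (B : forall i, 'M[R]_(p_ i)) i j k l : i != j ->
  (\mxdiag_i B i) (tagnat.Rank i k) (tagnat.Rank j l) = 0.
Proof. by move=> /negbTE ij; rewrite /mxdiag mxblock_RankE ij mxE. Qed.

Lemma colsum_mxdiag (B : forall i, 'M[R]_(p_ i)) i l :
  \sum_t (\mxdiag_i B i) t (tagnat.Rank i l) = \sum_k B i k l.
Proof.
rewrite sum_Rank (bigD1 i) //= [X in _ + X]big1 ?addr0 => [|j ji].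
  by apply: eq_bigr => k _; rewrite mxdiag_RankE.
by apply: big1 => k _; rewrite mxdiag_Rank0.
Qed.

Lemma mul_mxdiag (B C : forall i, 'M[R]_(p_ i)) :
  \mxdiag_i B i *m \mxdiag_i C i = \mxdiag_i (B i *m C i).
Proof.
rewrite {2}/mxdiag mul_mxdiag_mxblock /mxdiag; apply: eq_mxblock => i j.
by case: (eqVneq i j) => [<-|ij]; rewrite ?conform_mx_id ?mulmx0.
Qed.

Lemma exp_mxdiag (B : forall i, 'M[R]_(p_ i)) k :
  (\mxdiag_i B i) ^+ k = \mxdiag_i (B i ^+ k).
Proof.
elim: k => [|k IH].
  rewrite expr0; transitivity (\mxdiag_i ((1 : R)%:M : 'M[R]_(p_ i))).
    by rewrite mxdiagZ.
  by apply: eq_mxdiag => i; rewrite expr0.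
by rewrite exprS IH -mulmxE mul_mxdiag; apply: eq_mxdiag => i; rewrite exprS mulmxE.
Qed.

Lemma Rank_ind (P : 'I_(\sum_i p_ i) -> 'I_(\sum_i p_ i) -> Prop) :
  (forall i j (k : 'I_(p_ i)) (l : 'I_(p_ j)), P (tagnat.Rank i k) (tagnat.Rank j l)) ->
  forall s t, P s t.
Proof. by move=> H s t; rewrite -(tagnat.sig2K s) -(tagnat.sig2K t). Qed.

Lemma mx_null_mxdiag (u : nat -> forall i, 'M[R]_(p_ i)) :
  (forall i, mx_null (fun k => u k i)) -> mx_null (fun k => \mxdiag_i u k i).
Proof.
move=> z e e0.
have [N HN] := fin_eventually (Q := fun i k => forall a b, `|u k i a b| <= e)
  (fun i => z i e e0).
exists N => k Nk; apply: Rank_ind => i j a b.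
case: (eqVneq i j) => [ij|ij]; last by rewrite mxdiag_Rank0 // normr0 ltW.
by subst j; rewrite mxdiag_RankE HN.
Qed.

End BlockMatrices.

Section BlockTriangularLeak.
Variable R : realType.
Variables (Rn : nat) (NR : 'I_Rn -> nat) (BR : forall r1 r2 : 'I_Rn, 'M[R]_(NR r1, NR r2)).
Let T := \mxblock_(r1 < Rn, r2 < Rn) BR r1 r2.
Hypothesis BR_upper : forall r1 r2 : 'I_Rn, (r2 < r1)%N -> BR r1 r2 = 0.
Hypothesis T0 : nonneg_mx T.
Hypothesis BR_irr : forall r, irreducible_mx (BR r r).
Hypothesis BR_leak : forall r, exists k, \sum_i BR r r i k < 1.

Let T_RankE r1 r2 i j : T (tagnat.Rank r1 i) (tagnat.Rank r2 j) = BR r1 r2 i j.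
Proof. exact: mxblock_RankE. Qed.

Let BR0 r1 r2 i j : 0 <= BR r1 r2 i j.
Proof. by rewrite -T_RankE. Qed.

Lemma diag_block_mxexp_le r m i j :
  (BR r r ^+ m) i j <= (T ^+ m) (tagnat.Rank r i) (tagnat.Rank r j).
Proof.
elim: m i j => [|m IH] i j.
  by rewrite !expr0 !mxE; case: (eqVneq i j) => [->|ij]; rewrite ?eqxx ?ler0n.
rewrite !exprS -!mulmxE !mxE.
apply: (le_trans (y := \sum_k T (tagnat.Rank r i) (tagnat.Rank r k)
                              * (T ^+ m) (tagnat.Rank r k) (tagnat.Rank r j))).
  apply: ler_sum => k _; rewrite T_RankE ler_wpM2l ?IH // -T_RankE; exact: T0.
rewrite [leRHS]sum_Rank.
apply: (ler_sum_term (fun r' => \sum_(k : 'I_(NR r')) T (tagnat.Rank r i) (tagnat.Rank r' k)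
                                * (T ^+ m) (tagnat.Rank r' k) (tagnat.Rank r j))).
by move=> r'; apply: sumr_ge0 => k _; rewrite mulr_ge0 // nonneg_mxexp.
Qed.

(* Induction along the block order: a column of block r either leaks itself
   or, through a positive entry, feeds a block r1 < r. *)
Lemma reach_leaky_Rank r k :
  exists m l, 0 < (T ^+ m) l (tagnat.Rank r k) /\ \sum_i T i l < 1.
Proof.
move: r k; suff reach n : forall r : 'I_Rn, (r < n)%N -> forall k : 'I_(NR r),
    exists m l, 0 < (T ^+ m) l (tagnat.Rank r k) /\ \sum_i T i l < 1.
  by move=> r; apply: (reach r.+1).
elim: n => [//|n IH] r rn k.
have [j0 leak_j0] := BR_leak r; have [_ /(_ j0 k) [m hm]] := BR_irr r.
have pos_m : 0 < (T ^+ m) (tagnat.Rank r j0) (tagnat.Rank r k).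
  by apply: lt_le_trans hm _; apply: diag_block_mxexp_le.
case: (ltP (\sum_i T i (tagnat.Rank r j0)) 1) => [lt1|].
  by exists m, (tagnat.Rank r j0).
rewrite sum_Rank (bigD1 r) //=; under eq_bigr do rewrite T_RankE.
under [X in _ <= _ + X]eq_bigr do under eq_bigr do rewrite T_RankE.
move=> ge1; have /eqP outer_neq0 : \sum_(r1 | r1 != r) \sum_i BR r1 r i j0 != 0.
  by rewrite gt_eqF //; move: leak_j0 ge1; lra.
have [r1 /andP[r1r /lt0r_neq0/eqP inner_neq0]] :=
  psumr_neq0P (fun r1 _ => sumr_ge0 _ (fun i _ => BR0 _ _)) outer_neq0.
have [i /andP[_ pos_i]] := psumr_neq0P (fun i _ => BR0 _ _) inner_neq0.
have r1r_lt : (r1 < r)%N.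
  case: (ltngtP r1 r) => // [rr1|/val_inj r1E]; last by rewrite r1E eqxx in r1r.
  by move: pos_i; rewrite BR_upper // mxE ltxx.
have [m' [l' [pos_m' leak_l']]] := IH r1 (leq_trans r1r_lt rn) i.
exists (m' + (1 + m))%N, l'; split => //.
apply: mxexp_pos_trans pos_m' => //; apply: mxexp_pos_trans pos_m _ => //.
by rewrite expr1 T_RankE.
Qed.

End BlockTriangularLeak.

Theorem lemma1 (R : realType) (S Rn : nat) (hS : (0 < S)%N)
  (NS : 'I_S -> nat) (NR : 'I_Rn -> nat)
  (As : forall s : 'I_S, 'M[R]_(NS s))
  (TSR : 'M[R]_(\sum_(s < S) NS s, \sum_(r < Rn) NR r))
  (BR : forall r1 r2 : 'I_Rn, 'M[R]_(NR r1, NR r2))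
  (p : forall s : 'I_S, 'cV[R]_(NS s)) :
  let TSS := \mxdiag_(s < S) As s in
  let TRR := \mxblock_(r1 < Rn, r2 < Rn) BR r1 r2 in
  let A := block_mx TSS TSR 0 TRR in
  (* T_RR is block upper triangular *)
  (forall r1 r2 : 'I_Rn, (r2 < r1)%N -> BR r1 r2 = 0) ->
  (* A has nonnegative entries and is left-stochastic *)
  (forall l k, 0 <= A l k) ->
  (forall k, \sum_l A l k = 1) ->
  (* each A_s is primitive, with Perron vector p_s *)
  (forall s, primitive_mx (As s)) ->
  (forall s, perron_vector (As s) (p s)) ->
  (* each A_r is irreducible and has a column summing to less than one *)
  (forall r, irreducible_mx (BR r r)) ->
  (forall r, exists k, \sum_i BR r r i k < 1) ->
  let W := TSR *m invmx (1%:M - TRR) in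
  let Theta := \mxdiag_(s < S) (p s *m const_mx 1) in
  (1%:M - TRR) \in unitmx /\
  (fun n : nat => A ^+ n) @ \oo --> block_mx Theta (Theta *m W) 0 0.
Proof.
move=> TSS TRR A TRR_upper A0 A1 As_prim As_perron BR_irr BR_leak W Theta.
have [TSS_col TRR_col] := block_upper_colsum A0 A1.
have TRR0 : nonneg_mx TRR.
  by move=> i j; have := A0 (rshift _ i) (rshift _ j); rewrite block_mxEdr.
have As_col s j : \sum_i As s i j = 1 by rewrite -colsum_mxdiag TSS_col.
have TRR_null : mx_null (fun k => TRR ^+ k).
  apply: substochastic_mxexp_null => //; apply: leaky_mxexp => // j.
  by rewrite -(tagnat.sig2K j); apply: reach_leaky_Rank.
have TRR_unit := unitmx_1_subr_mx_null TRR_null.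
split=> //; apply: block_upper_mxexp_cvg => //.
- rewrite mul_mxdiag; apply: eq_mxdiag => s.
  by rewrite -mulmxA const1_mul_stochastic.
- apply: (eq_mx_null (u := fun k => \mxdiag_s (As s ^+ k - p s *m const_mx 1))).
    by move=> k; rewrite exp_mxdiag mxdiagB.
  by apply: mx_null_mxdiag => s; apply: perron_mxexp_null.
- by exists 1; split=> // k i j; rewrite !mxE; apply: stochastic_mxexp_entry_le1.
Qed.
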